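(* Assume $\sigma_1(x)=\tfrac12\sigma_1''(0)(x-a_1)(x-b_1)$ and $\sigma_2(x)=\tfrac12\sigma_2''(0)(x-a_2)(x-b_2)$ with $\sigma_1''(0)\ne0$, $\sigma_2''(0)\ne0$ and real zeros satisfying $a_1<0<a_2\le b_2<b_1$, and assume $q^2\Lambda_q<0$, where $\Lambda_q=q^{-2}\Big[1+\frac{(1-q^{-1})\tau'(0)}{\frac12\sigma_1''(0)}\Big]$. Put $a=b_2$ and $b=q^{-1}b_1$, and suppose $q^{-N-1}a=b$ for some $N\in\mathbb{N}_0$. Let $$\rho(x)=|x|^{\iota}\frac{(qa/x,\,x/b;q)_\infty}{(a_1/x,\,x/a_2;q)_\infty},\qquad q^{\iota}=\frac{q^{-3}\sigma_2''(0)a_2}{\sigma_1''(0)b}.$$ Then there exist polynomials $P_0,\dots,P_N$, with $P_n$ of degree $n$ a solution of the q-EHT with $\lambda=\lambda_n$, and nonzero constants $d_n^2$, such that for $m,n\in\{0,\dots,N\}$ $$\int_a^{b}P_n(x)P_m(x)\rho(x)\,d_{q^{-1}}x=d_n^2\delta_{mn},$$ i.e. the $P_n$ are orthogonal with respect to $\rho$ supported on $\{q^{-k}a\}_{k=0}^N$.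
   Context: Throughout $0<q<1$. For a function $y$ and $\zeta\in\{q,q^{-1}\}$, $D_\zeta y(x)=\frac{y(x)-y(\zeta x)}{(1-\zeta)x}$ for $x\ne0$ and $D_\zeta y(0)=y'(0)$; $[n]_q=\frac{1-q^n}{1-q}$. Let $\sigma_1$ be a real polynomial of degree at most two, $\tau(x)=\tau'(0)x+\tau(0)$ a real polynomial with $\tau'(0)\ne0$, and $\sigma_2(x):=q[\sigma_1(x)+(1-q^{-1})x\tau(x)]$. The q-EHT with parameter $n$ is $\sigma_1(x)D_{q^{-1}}D_qy(x)+\tau(x)D_qy(x)+\lambda_ny(x)=0$, $\lambda_n=-[n]_q\big(\tau'(0)+\tfrac12[n-1]_{q^{-1}}\sigma_1''(0)\big)$. $(\alpha;q)_\infty=\prod_{k\ge0}(1-\alpha q^k)$, $(\alpha_1,\dots,\alpha_r;q)_\infty=\prod_i(\alpha_i;q)_\infty$. For an exponent defined by $q^{\iota}=c$ ($c\ne0$), $\iota$ is any complex number with $e^{\iota\ln q}=c$, and $|x|^{\iota}:=e^{\iota\ln|x|}$. For $a>0$ and $b=q^{-N-1}a$, the $q^{-1}$-Jackson integral is $\int_a^{b}f(x)\,d_{q^{-1}}x=(q^{-1}-1)a\sum_{k=0}^{N}q^{-k}f(q^{-k}a)$. *)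

From Stdlib Require Import Reals.
From Coquelicot Require Import Coquelicot.
Open Scope R_scope.

Definition cexp (z : C) : C :=
  (exp (Re z) * cos (Im z), exp (Re z) * sin (Im z)).

Definition cpow_abs (x : R) (iota : C) : C :=
  cexp (Cmult iota (RtoC (ln (Rabs x)))).

Fixpoint qpoch_fin (alpha q : R) (n : nat) : R :=
  match n with
  | O => 1
  | S n' => qpoch_fin alpha q n' * (1 - alpha * q ^ n')
  end.
Definition qpoch_inf (alpha q : R) : R := real (Lim_seq (qpoch_fin alpha q)).

Definition Dz (zeta : R) (y : R -> R) (x : R) : R :=
  if Req_EM_T x 0 then Derive y 0
  else (y x - y (zeta * x)) / ((1 - zeta) * x).

Definition qnum (q : R) (n : Z) : R := (1 - powerRZ q n) / (1 - q).

Definition sigma1 (s0 s1 s2 : R) (x : R) : R := s2 * x ^ 2 + s1 * x + s0.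
Definition tau (t0 t1 : R) (x : R) : R := t1 * x + t0.
Definition sigma2 (q s0 s1 s2 t0 t1 : R) (x : R) : R :=
  q * (sigma1 s0 s1 s2 x + (1 - / q) * x * tau t0 t1 x).

Definition lambda_n (q s0 s1 s2 t1 : R) (n : nat) : R :=
  - qnum q (Z.of_nat n)
    * (t1 + / 2 * qnum (/ q) (Z.of_nat n - 1) * Derive_n (sigma1 s0 s1 s2) 2 0).

Definition solves_qEHT (q s0 s1 s2 t0 t1 lam : R) (y : R -> R) : Prop :=
  forall x : R,
    sigma1 s0 s1 s2 x * Dz (/ q) (Dz q y) x + tau t0 t1 x * Dz q y x + lam * y x = 0.

Definition is_poly_deg (n : nat) (y : R -> R) : Prop :=
  exists c : nat -> R, c n <> 0 /\ forall x, y x = sum_n (fun k => c k * x ^ k) n.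

(* q^{-1}-Jackson integral from a to b = q^{-N-1} a *)
Definition jackson_qinv (q a : R) (N : nat) (f : R -> C) : C :=
  Cmult (RtoC ((/ q - 1) * a))
    (sum_n (fun k => Cmult (RtoC ((/ q) ^ k)) (f ((/ q) ^ k * a))) N).

Definition rho (q a b a1 a2 : R) (iota : C) (x : R) : C :=
  Cmult (cpow_abs x iota)
    (RtoC (qpoch_inf (q * a / x) q * qpoch_inf (x / b) q
           / (qpoch_inf (a1 / x) q * qpoch_inf (x / a2) q))).

(* On the grid x_k = q^-k a (k = 0..N) the q-EHT is the three-term difference equation
   A_k (y_(k+1) - y_k) + B_k (y_(k-1) - y_k) = -lambda y_k, with A and B proportional to
   -sigma1(x_k) and -sigma2(x_k).  The q-Pearson relation of rho shows that the Jackson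
   weights q^-k rho(x_k) are proportional to w_k = prod_(j<k) sigma1(x_j) / sigma2(x_(j+1)),
   which symmetrize this operator (w_(k+1) B_(k+1) = w_k A_k); since sigma2(a) = 0 and
   sigma1(q b) = 0 the boundary terms vanish, and the discrete Lagrange identity makes
   eigenvectors with distinct eigenvalues orthogonal.  The condition q^2 Lambda_q < 0 says
   that sigma1''(0) and sigma2''(0) have opposite signs; it makes the lambda_n pairwise
   distinct, so that a monic eigenpolynomial P_n of each degree exists (its coefficients
   solve a three-term recurrence downwards from the leading one), and it makes the weights
   w_k positive.  A polynomial of degree n <= N cannot vanish at the N + 1 grid points, so
   the norms are nonzero. *)

From Stdlib Require Import Reals Lra Lia Psatz FunctionalExtensionality.
From Coquelicot Require Import Coquelicot.
Open Scope R_scope.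

Lemma pow_le_1 (q : R) (n : nat) : 0 <= q <= 1 -> q ^ n <= 1.
Proof.
  intros Hq; induction n as [|n IH]; simpl; [lra|].
  assert (0 <= q ^ n) by (apply pow_le; lra); nra.
Qed.

Lemma real_Lim_seq_ge (u : nat -> R) (m M : R) :
  (forall n, m <= u n <= M) -> m <= real (Lim_seq u).
Proof.
  intros Hu.
  assert (H1 : Rbar_le m (Lim_seq u)).
  { rewrite <- (Lim_seq_const m); apply Lim_seq_le_loc; exists O; intros; apply Hu. }
  assert (H2 : Rbar_le (Lim_seq u) M).
  { rewrite <- (Lim_seq_const M); apply Lim_seq_le_loc; exists O; intros; apply Hu. }
  destruct (Lim_seq u); simpl in *; easy.
Qed.

Section QPochhammer.
Variable q : R.
Hypothesis Hq : 0 < q < 1.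

Lemma qpoch_fin_unit_interval (be : R) (n : nat) :
  0 <= be <= 1 -> 0 <= qpoch_fin be q n <= 1.
Proof.
  intros Hb; induction n as [|n IH]; simpl; [lra|].
  assert (0 <= q ^ n <= 1) by (split; [apply pow_le | apply pow_le_1]; lra).
  assert (0 <= be * q ^ n <= 1) by nra.
  nra.
Qed.

(* The Weierstrass product inequality prod (1 - x_k) >= 1 - sum x_k. *)
Lemma qpoch_fin_lower_bound (be : R) (n : nat) :
  0 <= be <= 1 -> 1 - be * (1 - q ^ n) / (1 - q) <= qpoch_fin be q n.
Proof.
  intros Hb; induction n as [|n IH]; simpl.
  - replace (1 - 1) with 0 by ring; unfold Rdiv; nra.
  - pose proof (qpoch_fin_unit_interval be n Hb).
    assert (0 <= be * q ^ n) by (apply Rmult_le_pos; [lra | apply pow_le; lra]).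
    replace (1 - be * (1 - q * q ^ n) / (1 - q))
      with (1 - be * (1 - q ^ n) / (1 - q) - be * q ^ n) by (field; lra).
    nra.
Qed.

Lemma qpoch_fin_pos (al : R) (n : nat) : 0 <= al < 1 -> 0 < qpoch_fin al q n.
Proof.
  intros Ha; induction n as [|n IH]; simpl; [lra|].
  assert (0 <= q ^ n <= 1) by (split; [apply pow_le | apply pow_le_1]; lra).
  assert (al * q ^ n < 1) by nra.
  nra.
Qed.

Lemma qpoch_inf_shift (al : R) : qpoch_inf al q = (1 - al) * qpoch_inf (al * q) q.
Proof.
  assert (Hfin : forall n, qpoch_fin al q (S n) = (1 - al) * qpoch_fin (al * q) q n).
  { induction n as [|n IH]; simpl in *; [ring | rewrite IH; ring]. }
  unfold qpoch_inf; rewrite <- Lim_seq_incr_1, (Lim_seq_ext _ _ Hfin), Lim_seq_scal_l.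
  destruct (Lim_seq (qpoch_fin (al * q) q)) as [r | |]; simpl; [ring | |];
    unfold Rbar_mult, Rbar_mult';
    repeat (destruct Rle_dec; try destruct Rle_lt_or_eq_dec); simpl; ring.
Qed.

Lemma qpoch_inf_shift_n (al : R) (M : nat) :
  qpoch_inf al q = qpoch_fin al q M * qpoch_inf (al * q ^ M) q.
Proof.
  induction M as [|M IH]; simpl.
  - rewrite Rmult_1_r; ring.
  - rewrite IH, qpoch_inf_shift; replace (al * q ^ M * q) with (al * (q * q ^ M)) by ring; ring.
Qed.

Lemma qpoch_inf_neq_0 (al : R) : 0 <= al < 1 -> qpoch_inf al q <> 0.
Proof.
  intros Ha.
  destruct (pow_lt_1_zero q ltac:(rewrite Rabs_pos_eq; lra) ((1 - q) / 2) ltac:(lra))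
    as [M HM].
  specialize (HM M (le_n M)); rewrite Rabs_pos_eq in HM by (apply pow_le; lra).
  set (be := al * q ^ M).
  assert (Hbe : 0 <= be <= (1 - q) / 2).
  { assert (0 <= q ^ M) by (apply pow_le; lra); unfold be; split; nra. }
  assert (Hhalf : / 2 <= qpoch_inf be q).
  { apply (real_Lim_seq_ge _ _ 1); intro n.
    pose proof (qpoch_fin_lower_bound be n ltac:(lra)).
    pose proof (qpoch_fin_unit_interval be n ltac:(lra)).
    assert (0 <= q ^ n <= 1) by (split; [apply pow_le | apply pow_le_1]; lra).
    assert (be * (1 - q ^ n) / (1 - q) <= / 2).
    { apply Rmult_le_reg_r with (1 - q); [lra|].
      unfold Rdiv; rewrite Rmult_assoc, Rinv_l by lra; nra. }
    lra. }
  rewrite (qpoch_inf_shift_n al M); fold be.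
  pose proof (qpoch_fin_pos al M Ha); nra.
Qed.

End QPochhammer.

Definition peval (c : nat -> R) (n : nat) (x : R) : R := sum_n (fun k => c k * x ^ k) n.

Definition deg_le (c : nat -> R) (s : nat) : Prop := forall k, (s < k)%nat -> c k = 0.

Definition coef_shift (c : nat -> R) (k : nat) : R := match k with O => 0 | S j => c j end.

Definition qint (r : R) (k : nat) : R := (1 - r ^ k) / (1 - r).

Definition coef_qdiff (r : R) (c : nat -> R) (k : nat) : R := qint r (S k) * c (S k).

(* Coquelicot's [sum_n] lemmas state equations in an abelian monoid; these versions are
   stated at type [R] so that [ring] and [lra] apply. *)
Lemma sum_n_S (a : nat -> R) (n : nat) : sum_n a (S n) = sum_n a n + a (S n) :> R.
Proof. now rewrite sum_Sn. Qed.

Lemma sum_n_shift (a : nat -> R) (n : nat) :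
  sum_n a (S n) = a O + sum_n (fun k => a (S k)) n :> R.
Proof.
  induction n as [|n IH]; [rewrite sum_n_S, !sum_O; simpl; ring|].
  rewrite sum_n_S, IH, (sum_n_S (fun k => a (S k))); ring.
Qed.

Lemma sum_n_ext_R (a b : nat -> R) (n : nat) :
  (forall k, (k <= n)%nat -> a k = b k) -> sum_n a n = sum_n b n :> R.
Proof. apply sum_n_ext_loc. Qed.

Lemma peval_ext (c d : nat -> R) (n : nat) (x : R) :
  (forall k, c k = d k) -> peval c n x = peval d n x.
Proof. intros H; apply sum_n_ext_R; intros k _; rewrite H; reflexivity. Qed.

Lemma peval_deg_le (c : nat -> R) (s m m' : nat) (x : R) :
  deg_le c s -> (s <= m)%nat -> (s <= m')%nat -> peval c m x = peval c m' x.
Proof.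
  intros Hc Hm Hm'.
  assert (H : forall p, (s <= p)%nat -> peval c p x = peval c s x).
  { intros p Hp; induction Hp as [|p Hp IH]; [reflexivity|].
    unfold peval in *; rewrite sum_n_S, IH, Hc by lia; ring. }
  now rewrite (H m Hm), (H m' Hm').
Qed.

Lemma peval_plus (c d : nat -> R) (n : nat) (x : R) :
  peval (fun k => c k + d k) n x = peval c n x + peval d n x.
Proof.
  unfold peval; rewrite <- (sum_n_plus (G := R_AbelianMonoid)).
  apply sum_n_ext_R; intros k _; unfold plus; simpl; ring.
Qed.

Lemma peval_scal (a : R) (c : nat -> R) (n : nat) (x : R) :
  peval (fun k => a * c k) n x = a * peval c n x.
Proof.
  unfold peval; rewrite <- (sum_n_mult_l (K := R_Ring)).
  apply sum_n_ext_R; intros k _; unfold mult; simpl; ring.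
Qed.

Lemma peval_0 (c : nat -> R) (n : nat) (x : R) : (forall k, c k = 0) -> peval c n x = 0.
Proof.
  intros Hc; unfold peval; induction n as [|n IH]; [rewrite sum_O | rewrite sum_n_S, IH];
    rewrite Hc; ring.
Qed.

Lemma peval_at_0 (c : nat -> R) (n : nat) : peval c n 0 = c O.
Proof.
  unfold peval; induction n as [|n IH]; [rewrite sum_O; simpl; ring|].
  rewrite sum_n_S, IH; simpl; ring.
Qed.

Lemma deg_le_shift (c : nat -> R) (s : nat) : deg_le c s -> deg_le (coef_shift c) (S s).
Proof. intros Hc [|k] Hk; [lia | apply Hc; lia]. Qed.

Lemma deg_le_qdiff (r : R) (c : nat -> R) (s : nat) : deg_le c s -> deg_le (coef_qdiff r c) s.
Proof. intros Hc k Hk; unfold coef_qdiff; rewrite Hc by lia; ring. Qed.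

Lemma peval_mul_x (c : nat -> R) (n : nat) (x : R) :
  x * peval c n x = peval (coef_shift c) (S n) x.
Proof.
  unfold peval; rewrite sum_n_shift, <- (sum_n_mult_l (K := R_Ring)); simpl.
  rewrite Rmult_0_l, Rplus_0_l; apply sum_n_ext_R; intros k _; unfold mult; simpl; ring.
Qed.

Lemma peval_scale_arg (c : nat -> R) (n : nat) (r x : R) :
  peval c n (r * x) = peval (fun k => c k * r ^ k) n x.
Proof. unfold peval; apply sum_n_ext_R; intros k _; rewrite Rpow_mult_distr; ring. Qed.

Lemma peval_qdiff_quotient (r : R) (c : nat -> R) (n : nat) (x : R) : x <> 0 -> r <> 1 ->
  (peval c (S n) x - peval c (S n) (r * x)) / ((1 - r) * x) = peval (coef_qdiff r c) n x.
Proof.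
  intros Hx Hr.
  replace (peval c (S n) x - peval c (S n) (r * x))
    with (peval (fun k => c k * (1 - r ^ k)) (S n) x).
  2:{ rewrite peval_scale_arg, (peval_ext _ (fun k => c k + -1 * (c k * r ^ k))),
        peval_plus, peval_scal by (intro; ring).
      ring. }
  unfold peval; rewrite sum_n_shift; simpl.
  replace (c O * (1 - 1) * 1) with 0 by ring; rewrite Rplus_0_l.
  unfold Rdiv; rewrite Rmult_comm, <- (sum_n_mult_l (K := R_Ring)).
  apply sum_n_ext_R; intros k _; unfold mult, coef_qdiff, qint; simpl.
  field; split; [lra | exact Hx].
Qed.

Lemma peval_derive_0 (c : nat -> R) (n : nat) :
  is_derive (peval c (S n)) 0 (c 1%nat).
Proof.
  assert (H : forall m, is_derive (peval c m) 0 (match m with O => 0 | S _ => c 1%nat end)).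
  { induction m as [|m IH].
    - apply (is_derive_ext (fun _ => c O)); [intro; unfold peval; rewrite sum_O; simpl; ring|].
      exact (is_derive_const (c O) 0).
    - apply (is_derive_ext (fun x => peval c m x + c (S m) * x ^ S m));
        [intro; unfold peval; rewrite sum_n_S; reflexivity|].
      assert (Hpow : is_derive (fun x => c (S m) * x ^ S m) 0
                       (match m with O => c 1%nat | S _ => 0 end)).
      { auto_derive; [exact I|]; destruct m; simpl; ring. }
      pose proof (is_derive_plus _ _ _ _ _ IH Hpow) as Hsum.
      destruct m; unfold plus in Hsum; simpl in Hsum |- *;
        [rewrite Rplus_0_l in Hsum | rewrite Rplus_0_r in Hsum]; exact Hsum. }
  exact (H (S n)).
Qed.

Lemma Dz_peval (r : R) (c : nat -> R) (n : nat) (x : R) :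
  r <> 1 -> Dz r (peval c (S n)) x = peval (coef_qdiff r c) n x.
Proof.
  intros Hr; unfold Dz; destruct (Req_EM_T x 0) as [->|Hx].
  - rewrite (is_derive_unique _ _ _ (peval_derive_0 c n)), peval_at_0.
    unfold coef_qdiff, qint; simpl; field; lra.
  - apply peval_qdiff_quotient; auto.
Qed.

Section Eigenpolynomials.
Variables q s0 s1 s2 t0 t1 : R.

Definition eigval (k : nat) : R := -(s2 * qint (/ q) (k - 1) * qint q k + t1 * qint q k).
Definition coef_alpha (k : nat) : R := s1 * qint (/ q) k * qint q (S k) + t0 * qint q (S k).
Definition coef_beta (k : nat) : R := s0 * qint (/ q) (S k) * qint q (S (S k)).

Definition qEHT_coef (c : nat -> R) (k : nat) : R :=
  let d := coef_qdiff q c in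
  let e := coef_qdiff (/ q) d in
  s2 * coef_shift (coef_shift e) k + s1 * coef_shift e k + s0 * e k
  + t1 * coef_shift d k + t0 * d k.

Lemma qEHT_coef_eigval (c : nat -> R) (k : nat) :
  qEHT_coef c k = - eigval k * c k + coef_alpha k * c (S k) + coef_beta k * c (S (S k)).
Proof.
  unfold qEHT_coef, eigval, coef_alpha, coef_beta, coef_qdiff.
  destruct k as [|[|k]]; simpl; unfold qint, Rdiv; simpl; ring.
Qed.

Lemma qEHT_coef_spec (c : nat -> R) (n : nat) (x : R) :
  0 < q < 1 -> deg_le c n ->
  sigma1 s0 s1 s2 x * Dz (/ q) (Dz q (peval c n)) x + tau t0 t1 x * Dz q (peval c n) x
  = peval (qEHT_coef c) (S (S n)) x.
Proof.
  intros Hq Hc.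
  set (d := coef_qdiff q c); set (e := coef_qdiff (/ q) d).
  assert (Hd : deg_le d n) by apply deg_le_qdiff, Hc.
  assert (He : deg_le e n) by apply deg_le_qdiff, Hd.
  assert (Hq1 : q <> 1) by lra.
  assert (Hqi1 : / q <> 1) by (intro E; apply Hq1; rewrite <- (Rinv_inv q), E; apply Rinv_1).
  assert (Ec : peval c n = peval c (S (S n)))
    by (extensionality y; apply (peval_deg_le _ n); auto).
  assert (Ed : Dz q (peval c n) = peval d (S n))
    by (rewrite Ec; extensionality y; apply Dz_peval; auto).
  assert (Ee : Dz (/ q) (Dz q (peval c n)) = peval e n)
    by (rewrite Ed; extensionality y; apply Dz_peval; auto).
  rewrite Ee, Ed; unfold sigma1, tau.
  replace ((s2 * x ^ 2 + s1 * x + s0) * peval e n x + (t1 * x + t0) * peval d (S n) x)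
    with (s2 * (x * (x * peval e n x)) + s1 * (x * peval e n x) + s0 * peval e n x
          + t1 * (x * peval d (S n) x) + t0 * peval d (S n) x) by ring.
  rewrite !peval_mul_x.
  assert (Hse : deg_le (coef_shift e) (S n)) by apply deg_le_shift, He.
  rewrite (peval_deg_le e n n (S (S n))), (peval_deg_le (coef_shift e) (S n) (S n) (S (S n))),
    (peval_deg_le d n (S n) (S (S n))) by (auto; lia).
  rewrite <- !peval_scal, <- !peval_plus.
  apply peval_ext; reflexivity.
Qed.

(* The coefficients of the monic eigenpolynomial of degree [n], computed downwards from
   [c n = 1] by the three-term recurrence of [eigcoef_rec]; [eigcoef_pair n m] holds
   [(c (n - m), c (n - m + 1))]. *)
Fixpoint eigcoef_pair (n m : nat) : R * R :=
  match m with
  | O => (1, 0)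
  | S m' =>
      let (c1, c2) := eigcoef_pair n m' in
      (-(coef_alpha (n - m) * c1 + coef_beta (n - m) * c2) / (eigval n - eigval (n - m)), c1)
  end.

Definition eigcoef (n k : nat) : R := if Nat.leb k n then fst (eigcoef_pair n (n - k)) else 0.

Lemma eigcoef_deg_le (n : nat) : deg_le (eigcoef n) n.
Proof. intros k Hk; unfold eigcoef; destruct (Nat.leb_spec k n); [lia | reflexivity]. Qed.

Lemma eigcoef_lead (n : nat) : eigcoef n n = 1.
Proof. unfold eigcoef; rewrite Nat.leb_refl, Nat.sub_diag; reflexivity. Qed.

Lemma eigcoef_rec (n : nat) : (forall k, (k < n)%nat -> eigval n <> eigval k) ->
  forall k, (eigval n - eigval k) * eigcoef n k + coef_alpha k * eigcoef n (S k)
            + coef_beta k * eigcoef n (S (S k)) = 0.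
Proof.
  intros Hd k; destruct (Nat.lt_trichotomy k n) as [Hk|[->|Hk]].
  - assert (E1 : eigcoef n (S k) = fst (eigcoef_pair n (n - S k))).
    { unfold eigcoef; destruct (Nat.leb_spec (S k) n); [reflexivity | lia]. }
    assert (E2 : eigcoef n (S (S k)) = snd (eigcoef_pair n (n - S k))).
    { unfold eigcoef; destruct (Nat.leb_spec (S (S k)) n).
      - replace (n - S k)%nat with (S (n - S (S k))) by lia; simpl.
        destruct (eigcoef_pair n (n - S (S k))); reflexivity.
      - replace (n - S k)%nat with O by lia; reflexivity. }
    unfold eigcoef at 1; destruct (Nat.leb_spec k n); [|lia].
    replace (n - k)%nat with (S (n - S k)) by lia; simpl.
    rewrite E1, E2; destruct (eigcoef_pair n (n - S k)) as [c1 c2]; simpl.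
    replace (n - S (n - S k))%nat with k by lia.
    field; specialize (Hd k Hk); lra.
  - rewrite eigcoef_lead, !(eigcoef_deg_le n) by lia; ring.
  - rewrite !(eigcoef_deg_le n) by lia; ring.
Qed.

Lemma eigpoly_solves (n : nat) : 0 < q < 1 -> (forall k, (k < n)%nat -> eigval n <> eigval k) ->
  solves_qEHT q s0 s1 s2 t0 t1 (eigval n) (peval (eigcoef n) n).
Proof.
  intros Hq Hd x.
  rewrite qEHT_coef_spec by (auto; apply eigcoef_deg_le).
  rewrite (peval_deg_le (eigcoef n) n n (S (S n))) by (auto using eigcoef_deg_le).
  rewrite <- peval_scal, <- peval_plus.
  apply peval_0; intro k; rewrite qEHT_coef_eigval, <- (eigcoef_rec n Hd k); ring.
Qed.

End Eigenpolynomials.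

Lemma Derive_n_quadratic (a b c : R) :
  Derive_n (fun x => a * x ^ 2 + b * x + c) 2 0 = 2 * a.
Proof.
  simpl; rewrite (Derive_ext _ (fun x => 2 * a * x + b)).
  - apply is_derive_unique; auto_derive; [exact I | ring].
  - intro x; apply is_derive_unique; auto_derive; [exact I | ring].
Qed.

Lemma Derive2_sigma1 (s0 s1 s2 : R) : Derive_n (sigma1 s0 s1 s2) 2 0 = 2 * s2.
Proof. apply Derive_n_quadratic. Qed.

Lemma Derive2_sigma2 (q s0 s1 s2 t0 t1 : R) : q <> 0 ->
  Derive_n (sigma2 q s0 s1 s2 t0 t1) 2 0 = 2 * (q * s2 - (1 - q) * t1).
Proof.
  intros Hq.
  rewrite (Derive_n_ext _
    (fun x => (q * s2 - (1 - q) * t1) * x ^ 2 + (q * s1 - (1 - q) * t0) * x + q * s0)).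
  - apply Derive_n_quadratic.
  - intro x; unfold sigma2, sigma1, tau; field; exact Hq.
Qed.

Section Eigenvalues.
Variables q s2 t1 : R.
Hypothesis Hq : 0 < q < 1.

Lemma lambda_n_eigval (s0 s1 : R) (n : nat) :
  lambda_n q s0 s1 s2 t1 n = eigval q s2 t1 n.
Proof.
  unfold lambda_n, eigval, qnum, qint; rewrite Derive2_sigma1.
  destruct n as [|n]; [simpl; unfold Rdiv; ring|].
  replace (Z.of_nat (S n) - 1)%Z with (Z.of_nat n) by lia.
  rewrite <- !pow_powerRZ; replace (S n - 1)%nat with n by lia.
  field; repeat split; lra.
Qed.

Lemma Lambda_q_neg_sign :
  q ^ 2 * ((/ q) ^ 2 * (1 + (1 - / q) * t1 / s2)) < 0 -> s2 * (q * s2 - (1 - q) * t1) < 0.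
Proof.
  intros HL.
  rewrite <- Rmult_assoc, <- Rpow_mult_distr, Rinv_r, pow1, Rmult_1_l in HL by lra.
  assert (Hs2 : s2 <> 0) by (intro E; rewrite E in HL; unfold Rdiv in HL;
                             rewrite Rinv_0, Rmult_0_r in HL; lra).
  replace (s2 * (q * s2 - (1 - q) * t1)) with (q * (s2 * s2) * (1 + (1 - / q) * t1 / s2))
    by (field; split; lra).
  assert (0 < s2 * s2) by nra; assert (0 < q * (s2 * s2)) by nra; nra.
Qed.

Lemma eigval_closed_form (k : nat) :
  eigval q s2 t1 k
  = -(1 - q ^ k) * (s2 * q * (q - q ^ k) / q ^ k + t1 * (1 - q)) / (1 - q) ^ 2.
Proof.
  assert (0 < q ^ k) by (apply pow_lt; lra).
  unfold eigval, qint; destruct k as [|k]; simpl; [field; lra|].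
  rewrite Nat.sub_0_r, pow_inv.
  assert (0 < q ^ k) by (apply pow_lt; lra).
  field; repeat split; lra.
Qed.

(* With [c2 = q s2 - (1 - q) t1] (half of sigma2''(0)), the eigenvalue gap factors as
   (q^n - q^k) (s2 q^2 - c2 q^n q^k) / (q^n q^k (1 - q)^2); the second factor has the
   sign of [s2] as soon as [s2] and [c2] have opposite signs. *)
Lemma eigval_injective (k n : nat) :
  s2 * (q * s2 - (1 - q) * t1) < 0 -> (k < n)%nat -> eigval q s2 t1 n <> eigval q s2 t1 k.
Proof.
  intros Hs Hkn E; rewrite !eigval_closed_form in E.
  assert (Hu : 0 < q ^ n) by (apply pow_lt; lra).
  assert (Hv : 0 < q ^ k) by (apply pow_lt; lra).
  assert (Huv : q ^ n < q ^ k).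
  { replace n with (k + (n - k))%nat by lia; rewrite pow_add.
    destruct (pow_lt_1_compat q (n - k) ltac:(lra) ltac:(lia)); nra. }
  set (u := q ^ n) in *; set (v := q ^ k) in *.
  assert (Hgap : (u - v) * (s2 * q ^ 2 - (q * s2 - (1 - q) * t1) * u * v) = 0).
  { apply Rmult_eq_reg_r with (/ (u * v * (1 - q) ^ 2));
      [| apply Rinv_neq_0_compat, Rgt_not_eq, Rmult_lt_0_compat; [nra | apply pow_lt; lra]].
    rewrite Rmult_0_l.
    replace ((u - v) * (s2 * q ^ 2 - (q * s2 - (1 - q) * t1) * u * v) * / (u * v * (1 - q) ^ 2))
      with (-(1 - u) * (s2 * q * (q - u) / u + t1 * (1 - q)) / (1 - q) ^ 2
            - -(1 - v) * (s2 * q * (q - v) / v + t1 * (1 - q)) / (1 - q) ^ 2)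
      by (field; repeat split; lra).
    lra. }
  assert (Hpos : 0 < s2 * (s2 * q ^ 2 - (q * s2 - (1 - q) * t1) * u * v)).
  { assert (s2 <> 0) by (intro; subst; lra).
    assert (0 < s2 * s2) by nra; assert (0 < q ^ 2) by nra; assert (0 < u * v) by nra.
    replace (s2 * (s2 * q ^ 2 - (q * s2 - (1 - q) * t1) * u * v))
      with (s2 * s2 * q ^ 2 - s2 * (q * s2 - (1 - q) * t1) * (u * v)) by ring.
    nra. }
  apply Rmult_integral in Hgap; destruct Hgap as [H|H]; [lra|].
  rewrite H in Hpos; lra.
Qed.

End Eigenvalues.

(* At [k = 0] the truncated [k - 1] makes the [B 0] term vanish. *)
Definition diff_op (A B f : nat -> R) (k : nat) : R :=
  A k * (f (S k) - f k) + B k * (f (k - 1)%nat - f k).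

Lemma discrete_lagrange_identity (w A B f g : nat -> R) (N : nat) :
  (forall k, (k < N)%nat -> w (S k) * B (S k) = w k * A k) ->
  sum_n (fun k => w k * (g k * diff_op A B f k - f k * diff_op A B g k)) N
  = w N * A N * (g N * f (S N) - f N * g (S N)) :> R.
Proof.
  induction N as [|N IH]; intros Hb; unfold diff_op in *.
  - rewrite sum_O; simpl; ring.
  - rewrite sum_n_S, IH by (intros; apply Hb; lia).
    replace (S N - 1)%nat with N by lia.
    rewrite <- (Hb N) by lia; ring.
Qed.

Lemma diff_op_eigvec_orthogonal (w A B f g : nat -> R) (lf lg : R) (N : nat) :
  (forall k, (k < N)%nat -> w (S k) * B (S k) = w k * A k) -> A N = 0 ->
  (forall k, (k <= N)%nat -> diff_op A B f k = - lf * f k) ->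
  (forall k, (k <= N)%nat -> diff_op A B g k = - lg * g k) ->
  lf <> lg -> sum_n (fun k => w k * f k * g k) N = 0 :> R.
Proof.
  intros Hb HA Hf Hg Hl.
  pose proof (discrete_lagrange_identity w A B f g N Hb) as E.
  rewrite HA, Rmult_0_r, Rmult_0_l in E.
  rewrite (sum_n_ext_R _ (fun k => (lg - lf) * (w k * f k * g k))) in E
    by (intros k Hk; rewrite Hf, Hg by exact Hk; ring).
  rewrite (sum_n_mult_l (K := R_Ring)) in E; unfold mult in E; simpl in E.
  apply Rmult_integral in E; destruct E as [E|E]; [lra | exact E].
Qed.

Lemma sum_n_nonneg_eq_0 (a : nat -> R) (N : nat) :
  (forall k, (k <= N)%nat -> 0 <= a k) -> sum_n a N = 0 :> R ->
  forall k, (k <= N)%nat -> a k = 0.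
Proof.
  induction N as [|N IH]; intros Ha Hs k Hk.
  - rewrite sum_O in Hs; replace k with O by lia; exact Hs.
  - assert (Hpos : forall M, (M <= S N)%nat -> 0 <= sum_n a M).
    { induction M as [|M IHM]; intros HM; [rewrite sum_O; apply Ha; lia|].
      rewrite sum_n_S; specialize (IHM ltac:(lia)); specialize (Ha (S M) HM); lra. }
    rewrite sum_n_S in Hs.
    pose proof (Hpos N ltac:(lia)); pose proof (Ha (S N) (le_n _)).
    destruct (Nat.eq_dec k (S N)) as [->|Hne]; [lra|].
    apply IH; [intros; apply Ha | | ]; lia || lra.
Qed.

Definition qgrid (q a : R) (k : nat) : R := (/ q) ^ k * a.

Lemma qgrid_S (q a : R) (k : nat) : qgrid q a (S k) = / q * qgrid q a k.
Proof. unfold qgrid; simpl; ring. Qed.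

Lemma qgrid_pred (q a : R) (k : nat) : q <> 0 -> q * qgrid q a (S k) = qgrid q a k.
Proof. intros Hq; rewrite qgrid_S; field; exact Hq. Qed.

Lemma qgrid_neq_0 (q a : R) (k : nat) : q <> 0 -> a <> 0 -> qgrid q a k <> 0.
Proof.
  intros Hq Ha; unfold qgrid; apply Rmult_integral_contrapositive_currified; [|exact Ha].
  apply pow_nonzero, Rinv_neq_0_compat, Hq.
Qed.

Lemma qint_S_pos (q : R) (k : nat) : 0 < q < 1 -> 0 < qint q (S k).
Proof.
  intros Hq; unfold qint; destruct (pow_lt_1_compat q (S k) ltac:(lra) ltac:(lia)).
  apply Rdiv_lt_0_compat; lra.
Qed.

(* Each q-difference lowers the degree by one and loses one grid point. *)
Lemma peval_vanishing_on_qgrid (q a : R) (m s : nat) (c : nat -> R) :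
  0 < q < 1 -> a <> 0 -> deg_le c m ->
  (forall k, (s <= k <= s + m)%nat -> peval c m (qgrid q a k) = 0) -> c m = 0.
Proof.
  intros Hq Ha; revert c s; induction m as [|m IH]; intros c s Hc Hz.
  - specialize (Hz s ltac:(lia)); unfold peval in Hz; rewrite sum_O in Hz; simpl in Hz; lra.
  - assert (Hd : coef_qdiff q c m = 0).
    { apply (IH _ (S s)); [intros k Hk; unfold coef_qdiff; rewrite Hc by lia; ring |].
      intros [|k] Hk; [lia|].
      rewrite <- peval_qdiff_quotient by (try apply qgrid_neq_0; lra).
      rewrite qgrid_pred, !Hz by (lra || lia); unfold Rdiv; ring. }
    unfold coef_qdiff in Hd; pose proof (qint_S_pos q m Hq).
    apply Rmult_integral in Hd; destruct Hd; [lra | assumption].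
Qed.

Lemma cexp_add (z w : C) : cexp (Cplus z w) = Cmult (cexp z) (cexp w).
Proof.
  destruct z as [a b], w as [c d]; unfold cexp, Cplus, Cmult; simpl.
  rewrite exp_plus, cos_plus, sin_plus; f_equal; ring.
Qed.

Lemma cexp_neq_0 (z : C) : cexp z <> 0%C.
Proof.
  destruct z as [a b]; unfold cexp; simpl; intro E; injection E as E1 E2.
  pose proof (exp_pos a); pose proof (sin2_cos2 b); unfold Rsqr in *.
  apply Rmult_integral in E1; apply Rmult_integral in E2; nra.
Qed.

Lemma RtoC_neq_0 (r : R) : r <> 0 -> RtoC r <> 0%C.
Proof. intros Hr E; injection E; exact Hr. Qed.

Lemma RtoC_sum_n (a : nat -> R) (n : nat) :
  RtoC (sum_n a n) = sum_n (fun k => RtoC (a k)) n.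
Proof.
  induction n as [|n IH]; [now rewrite !sum_O|].
  rewrite !sum_Sn, <- IH; unfold plus; simpl; now rewrite RtoC_plus.
Qed.

Lemma cpow_abs_mul (io : C) (q y : R) : 0 < q -> 0 < y ->
  cpow_abs (q * y) io = Cmult (cpow_abs y io) (cexp (Cmult io (RtoC (ln q)))).
Proof.
  intros Hq Hy; unfold cpow_abs; rewrite <- cexp_add; f_equal.
  rewrite !Rabs_pos_eq by nra; rewrite ln_mult by lra.
  rewrite RtoC_plus; ring.
Qed.

Definition rho_qpoch (q a b a1 a2 x : R) : R :=
  qpoch_inf (q * a / x) q * qpoch_inf (x / b) q / (qpoch_inf (a1 / x) q * qpoch_inf (x / a2) q).

Lemma rho_eq (q a b a1 a2 : R) (io : C) (x : R) :
  rho q a b a1 a2 io x = Cmult (cpow_abs x io) (RtoC (rho_qpoch q a b a1 a2 x)).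
Proof. reflexivity. Qed.

Lemma rho_qpoch_step (q a b a1 a2 x : R) :
  q <> 0 -> x <> 0 -> b <> 0 -> a2 <> 0 -> q * a <> x ->
  qpoch_inf (a1 / x) q * qpoch_inf (x / a2) q <> 0 ->
  qpoch_inf (a1 / (/ q * x)) q * qpoch_inf (/ q * x / a2) q <> 0 ->
  rho_qpoch q a b a1 a2 (/ q * x)
  = rho_qpoch q a b a1 a2 x
    * ((1 - / q * x / b) * (1 - a1 / x) / ((1 - q * a / x) * (1 - / q * x / a2))).
Proof.
  intros Hq Hx Hb Ha2 Hax H1 H2; set (y := / q * x) in *; unfold rho_qpoch.
  assert (Hy : y <> 0) by (unfold y; apply Rmult_integral_contrapositive_currified;
                             [apply Rinv_neq_0_compat |]; auto).
  assert (shift : forall u v, u * q = v -> qpoch_inf u q = (1 - u) * qpoch_inf v q)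
    by (intros u v <-; apply qpoch_inf_shift).
  rewrite (shift (q * a / x) (q * a / y)) by (unfold y; field; auto).
  rewrite (shift (y / b) (x / b)) by (unfold y; field; auto).
  rewrite (shift (a1 / x) (a1 / y)) in H1 |- * by (unfold y; field; auto).
  rewrite (shift (y / a2) (x / a2)) in H2 |- * by (unfold y; field; auto).
  assert (Hnz : forall u v, u * v <> 0 -> u <> 0 /\ v <> 0)
    by (intros u v H; split; intro E; apply H; rewrite E; ring).
  destruct (Hnz _ _ H1) as [[Ha1x Hp1]%Hnz Hp2].
  destruct (Hnz _ _ H2) as [_ [Hya2 _]%Hnz].
  field; repeat split; auto.
  - intro E; apply Hya2; replace y with a2 by lra; field; exact Ha2.
  - intro E; apply Hax; lra.
  - intro E; apply Ha1x; replace a1 with x by lra; field; exact Hx.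
Qed.

(* Multiplying the q-EHT at [x] by the denominators of the two q-derivatives turns it
   into a three-term relation between [y (x / q)], [y x] and [y (q x)]. *)
Definition qEHT_coefA (q s0 s1 s2 x : R) : R :=
  - sigma1 s0 s1 s2 x / ((1 - / q) * (1 - q) * / q * x ^ 2).
Definition qEHT_coefB (q s0 s1 s2 t0 t1 x : R) : R :=
  - sigma2 q s0 s1 s2 t0 t1 x / (q * (1 - / q) * (1 - q) * x ^ 2).

Lemma qEHT_three_term (q s0 s1 s2 t0 t1 lam : R) (y : R -> R) (x : R) :
  0 < q < 1 -> x <> 0 -> solves_qEHT q s0 s1 s2 t0 t1 lam y ->
  qEHT_coefA q s0 s1 s2 x * (y (/ q * x) - y x)
  + qEHT_coefB q s0 s1 s2 t0 t1 x * (y (q * x) - y x) = - lam * y x.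
Proof.
  intros Hq Hx Hy; specialize (Hy x); unfold Dz in Hy.
  destruct (Req_EM_T x 0) as [|_]; [contradiction|].
  destruct (Req_EM_T (/ q * x) 0) as [E|_].
  { apply Rmult_integral in E; destruct E as [E|E]; [|contradiction].
    apply Rinv_neq_0_compat in E; lra. }
  replace (q * (/ q * x)) with x in Hy by (field; lra).
  assert (Hqi : 1 - / q <> 0).
  { intro E; assert (q = 1) by (rewrite <- (Rinv_inv q); replace (/ q) with 1 by lra;
                                apply Rinv_1); lra. }
  rewrite <- (Rplus_0_r (- lam * y x)), <- Hy.
  unfold qEHT_coefA, qEHT_coefB, sigma2; field; repeat split; lra.
Qed.

Fixpoint partial_prod (F : nat -> R) (k : nat) : R :=
  match k with O => 1 | S j => partial_prod F j * F j end.

Section Orthogonality.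
Variables (q s0 s1 s2 t0 t1 a1 b1 a2 b2 : R) (N : nat) (iota : C).

Let c2 := q * s2 - (1 - q) * t1.
Let x := qgrid q b2.
Let P (n : nat) : R -> R := peval (eigcoef q s0 s1 s2 t0 t1 n) n.
Let rho_ab (y : R) : C := rho q b2 (/ q * b1) a1 a2 iota y.
Let grid_ratio (k : nat) : R := sigma1 s0 s1 s2 (x k) / sigma2 q s0 s1 s2 t0 t1 (x (S k)).
Let omega : nat -> R := partial_prod grid_ratio.
Let A (k : nat) : R := qEHT_coefA q s0 s1 s2 (x k).
Let B (k : nat) : R := qEHT_coefB q s0 s1 s2 t0 t1 (x k).
Let weight (k : nat) : C := Cmult (RtoC ((/ q) ^ k)) (rho_ab (x k)).

Hypothesis Hq : 0 < q < 1.
Hypothesis Hsigma1 : forall y, sigma1 s0 s1 s2 y = s2 * (y - a1) * (y - b1).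
Hypothesis Hsigma2 : forall y, sigma2 q s0 s1 s2 t0 t1 y = c2 * (y - a2) * (y - b2).
Hypothesis Hsign : s2 * c2 < 0.
Hypotheses (Ha1 : a1 < 0) (Ha2 : 0 < a2) (Hab2 : a2 <= b2).
Hypothesis Hend : (/ q) ^ (S N) * b2 = / q * b1.
Hypothesis Hiota : cexp (Cmult iota (RtoC (ln q)))
  = RtoC ((/ q) ^ 3 * (2 * c2) * a2 / (2 * s2 * (/ q * b1))).
Hypothesis Hden : forall k, (k <= N)%nat ->
  qpoch_inf (a1 / qgrid q b2 k) q * qpoch_inf (qgrid q b2 k / a2) q <> 0.

Lemma c2_neq_0 : c2 <> 0.
Proof. intro E; rewrite E, Rmult_0_r in Hsign; lra. Qed.

Lemma grid_S (k : nat) : x (S k) = / q * x k.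
Proof. apply qgrid_S. Qed.

Lemma grid_last : x N = b1.
Proof.
  apply (Rmult_eq_reg_l (/ q)); [|apply Rinv_neq_0_compat; lra].
  rewrite <- grid_S; exact Hend.
Qed.

Lemma grid_bounds (k : nat) : b2 <= x k /\ b2 < x (S k) /\ ((k < N)%nat -> x k < b1).
Proof.
  assert (Hqi : 1 < / q) by (rewrite <- Rinv_1; apply Rinv_lt_contravar; lra).
  assert (H : forall n m, (n < m)%nat -> x n < x m).
  { intros n m Hnm; unfold x, qgrid; pose proof (Rlt_pow (/ q) n m Hqi Hnm).
    apply Rmult_lt_compat_r; lra. }
  assert (Hx0 : x O = b2) by (unfold x, qgrid; simpl; ring).
  split; [|split].
  - destruct k; [lra|]; rewrite <- Hx0; apply Rlt_le, H; lia.
  - rewrite <- Hx0; apply H; lia.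
  - intros Hk; rewrite <- grid_last; apply H, Hk.
Qed.

Lemma grid_ratio_pos (k : nat) : (k < N)%nat -> 0 < grid_ratio k.
Proof.
  intros Hk; destruct (grid_bounds k) as (H1 & H2 & H3); specialize (H3 Hk).
  unfold grid_ratio; rewrite Hsigma1, Hsigma2.
  assert (0 < (x k - a1) * (b1 - x k)) by (apply Rmult_lt_0_compat; lra).
  assert (0 < (x (S k) - a2) * (x (S k) - b2)) by (apply Rmult_lt_0_compat; lra).
  replace (s2 * (x k - a1) * (x k - b1) / (c2 * (x (S k) - a2) * (x (S k) - b2)))
    with (- (s2 * c2) * ((x k - a1) * (b1 - x k)) / (c2 * c2 * ((x (S k) - a2) * (x (S k) - b2))))
    by (pose proof c2_neq_0; field; repeat split; lra).
  apply Rdiv_lt_0_compat; [nra|].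
  apply Rmult_lt_0_compat; [nra | assumption].
Qed.

Lemma omega_pos (k : nat) : (k <= N)%nat -> 0 < omega k.
Proof.
  unfold omega; induction k as [|k IH]; intros Hk; simpl; [lra|].
  pose proof (grid_ratio_pos k ltac:(lia)); specialize (IH ltac:(lia)); nra.
Qed.

Lemma grid_pos (k : nat) : 0 < x k.
Proof. destruct (grid_bounds k); lra. Qed.

Lemma weight_step (k : nat) : (k < N)%nat ->
  weight (S k) = Cmult (weight k) (RtoC (grid_ratio k)).
Proof.
  intros Hk; destruct (grid_bounds k) as (Hk1 & Hk2 & Hk3); specialize (Hk3 Hk).
  pose proof (grid_pos k) as Hxk; pose proof c2_neq_0.
  assert (Hs2 : s2 <> 0) by (intro E; rewrite E, Rmult_0_l in Hsign; lra).
  set (R0 := (/ q) ^ 3 * (2 * c2) * a2 / (2 * s2 * (/ q * b1))) in Hiota.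
  assert (Hcpow : cpow_abs (x k) iota = Cmult (cpow_abs (x (S k)) iota) (RtoC R0)).
  { rewrite <- Hiota, <- cpow_abs_mul by (lra || apply grid_pos).
    rewrite grid_S; f_equal; field; lra. }
  pose proof (Hden k ltac:(lia)) as Hd0; pose proof (Hden (S k) ltac:(lia)) as Hd1.
  change (qgrid q b2 (S k)) with (x (S k)) in Hd1; rewrite grid_S in Hd1.
  pose proof (rho_qpoch_step q b2 (/ q * b1) a1 a2 (x k) ltac:(lra) ltac:(lra)
    ltac:(apply Rmult_integral_contrapositive_currified; [apply Rinv_neq_0_compat|]; lra)
    ltac:(lra) ltac:(nra) Hd0 Hd1) as Hstep.
  assert (Hratio : (1 - / q * x k / (/ q * b1)) * (1 - a1 / x k)
                   / ((1 - q * b2 / x k) * (1 - / q * x k / a2))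
                   = q * R0 * grid_ratio k).
  { unfold R0, grid_ratio; rewrite Hsigma1, Hsigma2, grid_S.
    assert (q * b2 < x k) by nra; assert (q * a2 < x k) by nra.
    field; repeat split; lra. }
  unfold weight, rho_ab; rewrite !rho_eq, Hcpow, grid_S, Hstep, Hratio.
  destruct (cpow_abs (/ q * x k) iota) as [u v]; unfold Cmult, RtoC; simpl.
  f_equal; field; lra.
Qed.

Lemma weight_omega (k : nat) : (k <= N)%nat -> weight k = Cmult (weight O) (RtoC (omega k)).
Proof.
  induction k as [|k IH]; intros Hk.
  - unfold omega; simpl; ring.
  - rewrite weight_step, IH by lia; unfold omega; simpl; rewrite RtoC_mult; ring.
Qed.

Lemma jackson_on_grid (f : R -> R) :
  jackson_qinv q b2 N (fun y => Cmult (RtoC (f y)) (rho_ab y))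
  = Cmult (Cmult (RtoC ((/ q - 1) * b2)) (weight O))
          (RtoC (sum_n (fun k => f (x k) * omega k) N)).
Proof.
  unfold jackson_qinv; rewrite RtoC_sum_n, <- Cmult_assoc; f_equal.
  rewrite <- (sum_n_mult_l (K := C_Ring)); apply sum_n_ext_loc; intros k Hk.
  change ((/ q) ^ k * b2) with (x k); unfold mult; simpl.
  transitivity (Cmult (RtoC (f (x k))) (weight k)); [unfold weight, rho_ab; ring|].
  rewrite weight_omega, RtoC_mult by exact Hk; ring.
Qed.

Lemma weight_0_neq_0 : weight O <> 0%C.
Proof.
  unfold weight, rho_ab; rewrite rho_eq; simpl; rewrite Cmult_1_l.
  apply Cmult_neq_0; [apply cexp_neq_0 | apply RtoC_neq_0].
  assert (Hb1 : b2 <= b1) by (rewrite <- grid_last; apply grid_bounds).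
  change (qgrid q b2 0) with (x O); replace (x O) with b2 by (unfold x, qgrid; simpl; ring).
  unfold rho_qpoch; apply Rmult_integral_contrapositive_currified;
    [| apply Rinv_neq_0_compat; specialize (Hden O (Nat.le_0_l N));
       replace (qgrid q b2 0) with b2 in Hden by (unfold qgrid; simpl; ring); exact Hden].
  apply Rmult_integral_contrapositive_currified; apply qpoch_inf_neq_0; try exact Hq.
  - replace (q * b2 / b2) with q by (field; lra); lra.
  - replace (b2 / (/ q * b1)) with (q * (b2 / b1)) by (field; lra).
    assert (0 < b2 / b1) by (apply Rdiv_lt_0_compat; lra).
    assert (b2 / b1 <= 1)
      by (apply Rmult_le_reg_r with b1; [lra|]; unfold Rdiv; rewrite Rmult_assoc, Rinv_l; lra).
    nra.
Qed.

Lemma eigvals_distinct (k n : nat) : (k < n)%nat -> eigval q s2 t1 n <> eigval q s2 t1 k.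
Proof. apply eigval_injective; [exact Hq | exact Hsign]. Qed.

Lemma P_solves (n : nat) : solves_qEHT q s0 s1 s2 t0 t1 (eigval q s2 t1 n) (P n).
Proof. apply eigpoly_solves; [exact Hq | intros k Hk; apply eigvals_distinct, Hk]. Qed.

Lemma P_three_term (n k : nat) :
  diff_op A B (fun j => P n (x j)) k = - eigval q s2 t1 n * P n (x k).
Proof.
  rewrite <- (qEHT_three_term q s0 s1 s2 t0 t1 _ (P n) (x k) Hq
                (Rgt_not_eq _ _ (grid_pos k)) (P_solves n)).
  unfold diff_op, A, B; rewrite <- grid_S; destruct k as [|k].
  - replace (qEHT_coefB q s0 s1 s2 t0 t1 (x O)) with 0; [simpl; ring|].
    unfold qEHT_coefB; rewrite Hsigma2; unfold x, qgrid; simpl; unfold Rdiv; ring.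
  - replace (S k - 1)%nat with k by lia.
    unfold x; rewrite qgrid_pred by lra; reflexivity.
Qed.

Lemma omega_balance (k : nat) : (k < N)%nat -> omega (S k) * B (S k) = omega k * A k.
Proof.
  intros Hk; pose proof (grid_pos k) as Hx.
  assert (Hsig : sigma2 q s0 s1 s2 t0 t1 (x (S k)) <> 0)
    by (pose proof (grid_ratio_pos k Hk); unfold grid_ratio in *; intro E;
        rewrite E, Rdiv_0_r in *; lra).
  assert (Hqi : 1 - / q <> 0)
    by (assert (1 < / q) by (rewrite <- Rinv_1; apply Rinv_lt_contravar; lra); lra).
  unfold omega, A, B, grid_ratio, qEHT_coefA, qEHT_coefB; simpl; rewrite grid_S in *.
  field; repeat split; lra.
Qed.

Lemma A_last : A N = 0.
Proof.
  unfold A, qEHT_coefA; fold (x N); rewrite grid_last, Hsigma1; unfold Rdiv; ring.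
Qed.

Lemma P_orthogonal (m n : nat) : m <> n ->
  sum_n (fun k => P n (x k) * P m (x k) * omega k) N = 0 :> R.
Proof.
  intros Hmn.
  rewrite (sum_n_ext_R _ (fun k => omega k * P n (x k) * P m (x k))) by (intros; ring).
  apply (diff_op_eigvec_orthogonal omega A B _ _ (eigval q s2 t1 n) (eigval q s2 t1 m)).
  - exact omega_balance.
  - exact A_last.
  - intros k _; apply P_three_term.
  - intros k _; apply P_three_term.
  - destruct (proj1 (Nat.lt_gt_cases m n) Hmn); [|apply not_eq_sym];
      apply eigvals_distinct; lia.
Qed.

Lemma P_norm_neq_0 (n : nat) : (n <= N)%nat ->
  sum_n (fun k => P n (x k) * P n (x k) * omega k) N <> 0 :> R.
Proof.
  intros Hn Hsum.
  assert (Hz : forall k, (k <= N)%nat -> P n (x k) = 0).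
  { intros k Hk; pose proof (omega_pos k Hk).
    assert (Hk0 : P n (x k) * P n (x k) * omega k = 0).
    { apply (sum_n_nonneg_eq_0 (fun j => P n (x j) * P n (x j) * omega j) N);
        [intros j Hj | exact Hsum | exact Hk].
      pose proof (omega_pos j Hj); apply Rmult_le_pos; [nra | lra]. }
    apply Rmult_integral in Hk0; destruct Hk0 as [Hk0|]; [|lra].
    apply Rmult_integral in Hk0; tauto. }
  pose proof (eigcoef_lead q s0 s1 s2 t0 t1 n) as Hlead.
  rewrite (peval_vanishing_on_qgrid q b2 n 0 _ Hq ltac:(lra) (eigcoef_deg_le _ _ _ _ _ _ n))
    in Hlead; [lra|].
  intros k Hk; apply Hz; lia.
Qed.

Lemma orthogonal_eigenpolynomials :
  exists (P : nat -> R -> R) (d : nat -> C),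
    (forall n : nat, (n <= N)%nat ->
       is_poly_deg n (P n) /\
       solves_qEHT q s0 s1 s2 t0 t1 (lambda_n q s0 s1 s2 t1 n) (P n) /\
       d n <> RtoC 0) /\
    (forall m n : nat, (m <= N)%nat -> (n <= N)%nat ->
       jackson_qinv q b2 N
         (fun x => Cmult (RtoC (P n x * P m x)) (rho q b2 (/ q * b1) a1 a2 iota x))
       = (if Nat.eqb m n then d n else RtoC 0)).
Proof.
  exists P, (fun n => jackson_qinv q b2 N (fun y => Cmult (RtoC (P n y * P n y)) (rho_ab y))).
  split.
  - intros n Hn; split; [|split].
    + exists (eigcoef q s0 s1 s2 t0 t1 n); split; [rewrite eigcoef_lead; lra | reflexivity].
    + rewrite lambda_n_eigval by exact Hq; apply P_solves.
    + rewrite jackson_on_grid; apply Cmult_neq_0; [apply Cmult_neq_0 |].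
      * apply RtoC_neq_0, Rmult_integral_contrapositive_currified; [|lra].
        assert (1 < / q) by (rewrite <- Rinv_1; apply Rinv_lt_contravar; lra); lra.
      * exact weight_0_neq_0.
      * apply RtoC_neq_0, P_norm_neq_0, Hn.
  - intros m n Hm Hn; destruct (Nat.eqb_spec m n) as [->|Hmn]; [reflexivity|].
    change (rho q b2 (/ q * b1) a1 a2 iota) with rho_ab.
    rewrite jackson_on_grid, P_orthogonal by exact Hmn; ring.
Qed.

End Orthogonality.

Theorem theorem4p6 (q s0 s1 s2 t0 t1 a1 b1 a2 b2 : R) (N : nat) (iota : C) :
  0 < q < 1 ->
  t1 <> 0 ->
  Derive_n (sigma1 s0 s1 s2) 2 0 <> 0 ->
  Derive_n (sigma2 q s0 s1 s2 t0 t1) 2 0 <> 0 ->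
  (forall x, sigma1 s0 s1 s2 x = / 2 * Derive_n (sigma1 s0 s1 s2) 2 0 * (x - a1) * (x - b1)) ->
  (forall x, sigma2 q s0 s1 s2 t0 t1 x
             = / 2 * Derive_n (sigma2 q s0 s1 s2 t0 t1) 2 0 * (x - a2) * (x - b2)) ->
  a1 < 0 -> 0 < a2 -> a2 <= b2 -> b2 < b1 ->
  q ^ 2 * ((/ q) ^ 2 * (1 + (1 - / q) * t1 / (/ 2 * Derive_n (sigma1 s0 s1 s2) 2 0))) < 0 ->
  (/ q) ^ (S N) * b2 = / q * b1 ->
  cexp (Cmult iota (RtoC (ln q)))
    = RtoC ((/ q) ^ 3 * Derive_n (sigma2 q s0 s1 s2 t0 t1) 2 0 * a2
            / (Derive_n (sigma1 s0 s1 s2) 2 0 * (/ q * b1))) ->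
  (forall k : nat, (k <= N)%nat ->
     qpoch_inf (a1 / ((/ q) ^ k * b2)) q * qpoch_inf ((/ q) ^ k * b2 / a2) q <> 0) ->
  exists (P : nat -> R -> R) (d : nat -> C),
    (forall n : nat, (n <= N)%nat ->
       is_poly_deg n (P n) /\
       solves_qEHT q s0 s1 s2 t0 t1 (lambda_n q s0 s1 s2 t1 n) (P n) /\
       d n <> RtoC 0) /\
    (forall m n : nat, (m <= N)%nat -> (n <= N)%nat ->
       jackson_qinv q b2 N
         (fun x => Cmult (RtoC (P n x * P m x)) (rho q b2 (/ q * b1) a1 a2 iota x))
       = (if Nat.eqb m n then d n else RtoC 0)).
Proof.
  intros Hq _ _ _ Hs1 Hs2 Ha1 Ha2 Hab2 _ HLam Hend Hiota Hden.
  rewrite Derive2_sigma1 in Hs1, HLam, Hiota.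
  rewrite Derive2_sigma2 in Hs2, Hiota by lra.
  replace (/ 2 * (2 * s2)) with s2 in HLam by field.
  apply orthogonal_eigenpolynomials; try assumption.
  - intro y; rewrite Hs1; field.
  - intro y; rewrite Hs2; field.
  - exact (Lambda_q_neg_sign q s2 t1 Hq HLam).
Qed.
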